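(* Let $n\ge 1$ agents all value every item at $1$, and consider any online algorithm that in every round $s$ outputs a contiguous allocation $A^s$ of $M_s$ satisfying $v(A^s_i)\ge\frac1n v(M_s)-\frac{n-1}{n}\max_{g\in M_s}v(g)$ for all $i$. Let $t\ge n^2$ and $i\in[n]$, and write $t=ki-r$ with $0\le r<i$. If $k\ge n$ and the number of rounds is at least $kn$, then in round $kn$ item $g_t$ is assigned to agent $i$; moreover in round $t$ item $g_t$ is assigned to agent $n$. Consequently, if the number of rounds is large enough, $g_t$ is assigned to every agent in some round.
   Context: Items $g_1,g_2,\dots$ arrive online on a line; $M_s=\{g_1,\dots,g_s\}$. A contiguous allocation of $M_s$ is $A_i=\{g_{p_{i-1}+1},\dots,g_{p_i}\}$ for some $0=p_0\le p_1\le\dots\le p_n=s$, i.e. agent $i$ receives the $i$-th block from the left. The valuation is additive and identical for all agents. *)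

From mathcomp Require Import all_boot all_order all_algebra.
Set Implicit Arguments. Unset Strict Implicit. Unset Printing Implicit Defensive.
Import Order.TTheory GRing.Theory Num.Theory.

(* Items g_1, g_2, ... are indexed by positive naturals; every agent values
   every item at 1 (identical additive valuation). *)
Definition v (g : nat) : nat := 1.

(* A contiguous allocation of M_s = {g_1,...,g_s} among n agents is given by
   cut points p 0 <= p 1 <= ... <= p n with p 0 = 0 and p n = s;
   agent i (1 <= i <= n) receives {g_(p (i-1) + 1), ..., g_(p i)}. *)
Definition contiguous_alloc (n s : nat) (p : nat -> nat) : Prop :=
  p 0 = 0 /\ p n = s /\ (forall j, j < n -> p j <= p j.+1).

Definition bundle_val (p : nat -> nat) (i : nat) : nat :=
  \sum_(p i.-1 <= j < p i) v j.+1.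

(* v(M_s) and max_{g in M_s} v(g) (the max over the empty set is 0) *)
Definition total_val (s : nat) : nat := \sum_(0 <= j < s) v j.+1.
Definition max_val (s : nat) : nat := \max_(0 <= j < s) v j.+1.

Definition fair_round (n s : nat) (p : nat -> nat) : Prop :=
  forall i, 1 <= i <= n ->
    ((s%:R / n%:R - (n.-1)%:R / n%:R * (max_val s)%:R : rat)
       <= (bundle_val p i)%:R)%R.

(* an online algorithm running for T rounds: alloc s is the cut-point
   function of the allocation A^s output in round s (1 <= s <= T) *)
Definition valid_run (n T : nat) (alloc : nat -> nat -> nat) : Prop :=
  forall s, 1 <= s <= T ->
    contiguous_alloc n (total_val s) (alloc s) /\ fair_round n (total_val s) (alloc s).

Definition assigned (alloc : nat -> nat -> nat) (s i t : nat) : Prop :=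
  alloc s i.-1 < t <= alloc s i.

From mathcomp Require Import all_boot all_order all_algebra.
From mathcomp Require Import zify.
Set Implicit Arguments. Unset Strict Implicit.
Import Order.TTheory GRing.Theory Num.Theory.

(* With unit valuations, the value of a bundle is its size and
   the fairness guarantee of a round with s >= 1 items says exactly that
   every bundle has at least  s %/ n  items.  Hence:
   - in round k*n every bundle has at least k items, and since there are only
     k*n items, all bundles have exactly k items: agent j ends at cut point
     j*k.  If t + r = k*i with r < i <= n <= k, then (i-1)*k < t <= i*k, so
     g_t belongs to agent i;
   - in round t >= n the last agent receives at least one item, and the last
     item g_t is always in the last bundle.
   For the final claim, write t = k*i - r with k the ceiling of t / i; then
   n <= k <= t, so round k*n <= t*n exists whenever T >= t*n. *)

Lemma total_valE (s : nat) : total_val s = s.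
Proof. by rewrite /total_val /v sum_nat_const_nat subn0 muln1. Qed.

Lemma max_valE (s : nat) : max_val s = (0 < s).
Proof.
elim: s => [|s IH]; first by rewrite /max_val big_geq.
by rewrite /max_val big_nat_recr //= -/(max_val s) IH /v; case: (0 < s).
Qed.

Lemma bundle_valE (p : nat -> nat) (i : nat) : bundle_val p i = p i - p i.-1.
Proof. by rewrite /bundle_val /v sum_nat_const_nat muln1. Qed.

(* A fair allocation of s >= 1 unit items gives every agent at least
   s %/ n items: the guarantee reads  s <= n * |A_i| + (n - 1). *)
Lemma fair_bundle_lb (n s : nat) (p : nat -> nat) :
  1 <= n -> 1 <= s -> fair_round n s p ->
  forall i, 1 <= i <= n -> s %/ n <= p i - p i.-1.
Proof.
move=> hn hs hfair i hi; have := hfair i hi.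
rewrite max_valE hs bundle_valE /= mulr1n mulr1 -mulrBl.
rewrite ler_pdivrMr ?ltr0n // -!natrM lerBlDr -natrD ler_nat => hbound.
by rewrite -ltnS ltn_divLR //; lia.
Qed.

Section CutPoints.
Variables (n c : nat) (p : nat -> nat).
Hypothesis p_mono : forall j, j < n -> p j <= p j.+1.
Hypothesis p_gap : forall i, 1 <= i <= n -> c <= p i - p i.-1.

Lemma cut_lower (j : nat) : j <= n -> p 0 + j * c <= p j.
Proof.
elim: j => [|j IH] hj; first by rewrite mul0n addn0.
have := p_gap (i := j.+1); have := p_mono (j := j); have := IH (ltnW hj); simpl; lia.
Qed.

Lemma cut_upper (j : nat) : j <= n -> p j + (n - j) * c <= p n.
Proof.
move=> hj; rewrite -{1}(subKn hj).
elim: (n - j) (leq_subr j n) => [|m IH] hm; first by rewrite subn0 mul0n addn0.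
have := IH (ltnW hm); have := p_gap (i := n - m); have := p_mono (j := n - m.+1).
have -> : (n - m).-1 = n - m.+1 by lia.
have -> : (n - m.+1).+1 = n - m by lia.
lia.
Qed.

End CutPoints.

Lemma equal_split_cuts (n k : nat) (p : nat -> nat) :
  contiguous_alloc n (k * n) p ->
  (forall i, 1 <= i <= n -> k <= p i - p i.-1) ->
  forall j, j <= n -> p j = j * k.
Proof.
move=> [p0 [pn p_mono]] p_gap j hj.
have := cut_lower p_mono p_gap hj.
have := cut_upper p_mono p_gap hj.
rewrite p0 pn; nia.
Qed.

(* In round k*n (with k >= n), item g_t with t = k*i - r, 0 <= r < i, goes
   to agent i, because the round-k*n allocation is the equal split. *)
Lemma assigned_in_equal_round (n T : nat) (alloc : nat -> nat -> nat)
    (t i k r : nat) :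
  valid_run n T alloc -> 1 <= i <= n -> t + r = k * i -> r < i ->
  n <= k -> k * n <= T -> assigned alloc (k * n) i t.
Proof.
move=> hrun /andP[hi0 hin] htr hr hk hT.
have hn : 0 < n by lia.
have hkn : 0 < k * n by rewrite muln_gt0; lia.
have [halloc hfair] := hrun (k * n) ltac:(lia); rewrite total_valE in halloc hfair.
have hgap := fair_bundle_lb hn hkn hfair; rewrite mulnK // in hgap.
have hcut := equal_split_cuts halloc hgap.
rewrite /assigned !hcut; [nia | lia | lia].
Qed.

(* In any round t >= n the last agent receives at least t %/ n >= 1 items,
   so it holds the newest item g_t. *)
Lemma newest_to_last_agent (n T t : nat) (alloc : nat -> nat -> nat) :
  valid_run n T alloc -> 1 <= n <= t -> t <= T -> assigned alloc t n t.
Proof.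
move=> hrun /andP[hn hnt] hT.
have [[_ [hlast _]] hfair] := hrun t ltac:(lia); rewrite total_valE in hlast hfair.
have hgap := fair_bundle_lb hn (leq_trans hn hnt) hfair (i := n) ltac:(lia).
have hq : 1 <= t %/ n by rewrite divn_gt0.
by rewrite /assigned hlast; lia.
Qed.

(* Ceiling division: t = k*i - r with 0 <= r < i, where k = ceil (t / i);
   for t >= n*n and 1 <= i <= n this k satisfies n <= k <= t. *)
Lemma ceil_decomposition (n t i : nat) :
  n ^ 2 <= t -> 1 <= i <= n ->
  exists k r, [/\ t + r = k * i, r < i, n <= k & k <= t].
Proof.
move=> ht /andP[hi0 hin].
set k := (t + i.-1) %/ i.
have hdiv := divn_eq (t + i.-1) i; have hmod : (t + i.-1) %% i < i by rewrite ltn_mod.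
exists k, (k * i - t); split; [nia | nia | | nia].
by rewrite leq_divRL //; rewrite expnS expn1 in ht; nia.
Qed.

Theorem mainTheorem7 (n : nat) (hn : 1 <= n) :
  (forall (T : nat) (alloc : nat -> nat -> nat), valid_run n T alloc ->
   forall t i k r : nat, n ^ 2 <= t -> 1 <= i <= n ->
     t + r = k * i -> r < i -> n <= k -> k * n <= T ->
     assigned alloc (k * n) i t /\ assigned alloc t n t)
  /\
  (forall t : nat, n ^ 2 <= t ->
     exists T0 : nat, forall (T : nat) (alloc : nat -> nat -> nat),
       T0 <= T -> valid_run n T alloc ->
       forall i, 1 <= i <= n -> exists s, 1 <= s <= T /\ assigned alloc s i t).
Proof.
have hnn : n <= n ^ 2 by rewrite expnS expn1 leq_pmulr.
split.
  move=> T alloc hrun t i k r ht hi htr hr hk hT; split.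
    exact: assigned_in_equal_round hrun hi htr hr hk hT.
  apply: newest_to_last_agent hrun _ _; first by rewrite hn (leq_trans hnn ht).
  by case/andP: hi => _ hin; nia.
move=> t ht; exists (t * n) => T alloc hT hrun i hi.
have [k [r [htr hr hk hkt]]] := ceil_decomposition ht hi.
exists (k * n); split.
  by rewrite muln_gt0 (leq_trans hn hk) hn /= (leq_trans (leq_mul hkt (leqnn n))).
exact: assigned_in_equal_round hrun hi htr hr hk (leq_trans (leq_mul hkt (leqnn n)) hT).
Qed.
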